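(* Let $(\mathscr X,d)$ be a metric space and let $(\mu_n)_{n\geqslant 1}$ be a sequence of positive Borel measures on $\mathscr X$ such that $\mu_n(\mathscr X)\leqslant M$ for all $n$, where $M$ is a positive constant. Denote by $q_n(t)=\sup_{x\in\mathscr X}\mu_n(B(x,t))$ the concentration function of $\mu_n$. Assume that there is a function $q$ such that $q_n(t)\to q(t)$ as $n\to\infty$ for a.e. $t>0$, and that $\lim_{t\to\infty}q(t)=\alpha>0$. Fix an increasing sequence $t_n\to\infty$ such that $q_n(t_n)\to\alpha$. Then there exist a subsequence $(\mu_{n_k})_{k\geqslant1}$, a sequence of points $(x_k)_{k\geqslant1}\subset\mathscr X$ and a sequence $(R_k)_{k\geqslant1}$ of positive numbers such that $R_k\leqslant t_{n_k}$, $R_k\to\infty$, $\mu_{n_k}(B(x_k,R_k))\to\alpha$ as $k\to\infty$, and the sequence of measures $\big({\mu_{n_k}}_{|B(x_k,R_k)}\big)_{k\geqslant1}$ concentrates around $(x_k)_{k\geqslant1}$.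
   Context: $B(x,r)$ denotes the open ball of center $x$ and radius $r$ in $\mathscr X$. For a Borel measure $\mu$ and a Borel set $A$, the restriction $\mu_{|A}$ is defined by $\mu_{|A}(E)=\mu(A\cap E)$. A sequence $(\nu_k)_{k\geqslant1}$ of positive Borel measures on $\mathscr X$ concentrates around a sequence of points $(x_k)_{k\geqslant1}\subset\mathscr X$ if for every $\varepsilon>0$ there exists $R_\varepsilon>0$ such that $\nu_k(\mathscr X\setminus B(x_k,R_\varepsilon))<\varepsilon$ for all $k\geqslant1$. *)

From HB Require Import structures.
From mathcomp Require Import all_boot all_order all_algebra.
From mathcomp Require Import all_classical all_reals all_analysis.
Set Implicit Arguments. Unset Strict Implicit. Unset Printing Implicit Defensive.
Import Order.TTheory GRing.Theory Num.Theory.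
Local Open Scope classical_set_scope.
Local Open Scope ring_scope.

Section MetricDefs.
Variables (R : realType) (T : Type) (d : T -> T -> R).

Definition pl_is_metric : Prop :=
  [/\ forall x y, 0 <= d x y,
      forall x y, d x y = 0 <-> x = y,
      forall x y, d x y = d y x &
      forall x y z, d x z <= d x y + d y z].

Definition pl_mball (x : T) (r : R) : set T := [set y | d x y < r].

Definition pl_metric_open (U : set T) : Prop :=
  forall x, U x -> exists2 r : R, 0 < r & pl_mball x r `<=` U.

Definition pl_borel_sets : set (set T) := <<s pl_metric_open >>.

Definition pl_restrict (mu : set T -> \bar R) (A : set T) : set T -> \bar R :=
  fun E => mu (A `&` E).

Definition pl_conc_fun (mu : set T -> \bar R) (t : R) : \bar R :=
  ereal_sup [set mu (pl_mball x t) | x in [set: T]].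

Definition pl_concentrates_around (nu : nat -> set T -> \bar R) (x : nat -> T) : Prop :=
  forall eps : R, 0 < eps -> exists2 Re : R, 0 < Re &
    forall k, (nu k (~` pl_mball (x k) Re) < eps%:E)%E.
End MetricDefs.

(* For each b, a.e. convergence of q_n and q(t) -> alpha give a radius s_b such that,
   for large n, some ball B(Y_(n,b), s_b) has mu_n-mass > alpha - e_b, where e_b -> 0 and
   e_b <= alpha/2. As the total mass is at most M, at most 2M/alpha of these heavy
   balls can be pairwise disjoint. A Ramsey-type argument on the relation "the i-th and
   j-th heavy balls meet" (by induction on that bound) yields a subsequence n_k and indices
   g_0, g_1, ... with g_j >= j such that, eventually in k, the g_j-th ball meets the
   g_0-th one, hence lies in B(x_k, s_(g_0) + 2 s_(g_j)) with x_k = Y_(n_k, g_0). So the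
   mu_(n_k) are tight around x_k. Taking R_k = t_(n_k), the upper bound
   mu_(n_k)(B(x_k, R_k)) <= q_(n_k)(t_(n_k)) -> alpha then gives both the convergence of
   the mass to alpha and the smallness of the annuli B(x_k, R_k) \ B(x_k, r). *)

From HB Require Import structures.
From mathcomp Require Import all_boot all_order all_algebra.
From mathcomp Require Import all_classical all_reals all_analysis.
From mathcomp Require Import lra.
Import Order.TTheory GRing.Theory Num.Theory.
Set Implicit Arguments. Unset Strict Implicit. Unset Printing Implicit Defensive.
Local Open Scope classical_set_scope.

Lemma increasing_leq (phi : nat -> nat) :
  {homo phi : m n / m < n} -> forall k, k <= phi k.
Proof. by move=> phi_incr; elim=> // k IHk; exact: leq_ltn_trans IHk (phi_incr _ _ _). Qed.

Lemma increasing_cvgn (phi : nat -> nat) :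
  {homo phi : m n / m < n} -> phi @ \oo --> \oo.
Proof.
move=> /increasing_leq phi_ge; apply/cvgnyPge => A.
by near=> k; apply: leq_trans (phi_ge k); near: k; exact: nbhs_infty_ge.
Unshelve. all: end_near. Qed.

Lemma frequently_subseq (Q : nat -> nat -> Prop) :
  (forall k N, exists2 n, N <= n & Q k n) ->
  exists2 phi : nat -> nat, {homo phi : m n / m < n} & forall k, Q k (phi k).
Proof.
move=> hQ; have /choice[h hh] : forall kN : nat * nat, exists n, kN.2 <= n /\ Q kN.1 n.
  by move=> [k N]; have [n] := hQ k N; exists n.
pose fix phi k := if k is k'.+1 then h (k, (phi k').+1) else h (0, 0).
exists phi; last by case=> [|k]; [case: (hh (0, 0)) | case: (hh (k.+1, (phi k).+1))].
by apply: homo_ltn; [exact: ltn_trans | move=> k; have [] := hh (k.+1, (phi k).+1)].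
Qed.

Section StarSubsequence.
Variable adj : nat -> nat -> nat -> Prop.

Definition bounded_independence (K : nat) :=
  forall f : nat -> nat,
    \forall n \near \oo, exists a b, (a < b <= K) /\ adj n (f a) (f b).

Definition star_subsequence :=
  exists (phi g : nat -> nat), [/\ {homo phi : m n / m < n},
    forall j, j <= g j & forall j, \forall k \near \oo, adj (phi k) (g 0) (g j)].

Definition frequently_star (S : seq nat) :=
  forall N, exists2 n, N <= n & forall s, s \in S -> adj n 0 s.

Lemma star_subsequence_of_extensions :
  frequently_star [:: 0] ->
  (forall S, frequently_star S ->
     forall J, exists2 j, J <= j & frequently_star (j :: S)) ->
  star_subsequence.
Proof.
move=> star0 extend.
have /choice[next nextP] : forall Sk : seq nat * nat, exists j,
    frequently_star Sk.1 -> Sk.2 <= j /\ frequently_star (j :: Sk.1).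
  move=> [S k]; have [starS|nstarS] := pselect (frequently_star S); last by exists 0.
  by have [j] := extend S starS k; exists j.
pose fix chain k := if k is k'.+1 then next (chain k', k) :: chain k' else [:: 0].
have chain_star k : frequently_star (chain k).
  by elim: k => // k IHk; have [] := nextP (chain k, k.+1) IHk.
pose g k := head 0 (chain k).
have g_chain j k : j <= k -> g j \in chain k.
  elim: k => [|k IHk]; first by rewrite leqn0 => /eqP->; rewrite inE.
  by rewrite leq_eqVlt ltnS => /predU1P[->|/IHk]; rewrite inE ?eqxx // => ->; rewrite orbT.
have [phi phi_incr phiP] :=
  @frequently_subseq (fun k n => forall s, s \in chain k -> adj n 0 s) chain_star.
exists phi, g; split => // [[|j]|j] //=.
  by have [] := nextP (chain j, j.+1) (chain_star j).
near=> k; apply: phiP; apply: g_chain; near: k; exact: nbhs_infty_ge.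
Unshelve. all: end_near. Qed.

End StarSubsequence.

Lemma star_subsequence_restrict (adj : nat -> nat -> nat -> Prop) (psi : nat -> nat) J :
  {homo psi : m n / m < n} ->
  star_subsequence (fun k i j => adj (psi k) (J + i) (J + j)) -> star_subsequence adj.
Proof.
move=> psi_incr [phi [g [phi_incr g_ge gP]]].
exists (psi \o phi), (fun j => J + g j); split => //.
- by move=> m n mn; apply/psi_incr/phi_incr.
- by move=> j; apply: leq_trans (g_ge j) (leq_addl _ _).
Qed.

Lemma bounded_independence_drop (adj : nat -> nat -> nat -> Prop) (psi : nat -> nat) J K :
  {homo psi : m n / m < n} ->
  (forall j, J <= j -> \forall k \near \oo, ~ adj (psi k) 0 j) ->
  bounded_independence adj K.+1 ->
  bounded_independence (fun k i j => adj (psi k) (J + i) (J + j)) K.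
Proof.
move=> psi_incr far adj_bounded f.
pose f' a := if a is a'.+1 then J + f a' else 0.
have far_f : \forall k \near \oo, forall b : 'I_K.+1, ~ adj (psi k) 0 (J + f b).
  by apply: filter_forall => b; apply: far; exact: leq_addr.
have := increasing_cvgn psi_incr (adj_bounded f'); apply: filterS2 far_f.
move=> k farFk [[|a] [[|b] [/andP[ab bK] adj_ab]]] //.
  by case: (farFk (Ordinal bK)).
by exists a, b; split; first by apply/andP.
Qed.

Lemma star_subsequence_of_bounded (K : nat) (adj : nat -> nat -> nat -> Prop) :
  (forall i, \forall n \near \oo, adj n i i) ->
  bounded_independence adj K -> star_subsequence adj.
Proof.
elim: K adj => [|K IH] adj adj_refl adj_bounded.
  have [N _ /(_ N (leqnn N))[a [b [+ _]]]] := adj_bounded id.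
  by rewrite leqn0 => /andP[+ /eqP b0]; rewrite b0.
(* Either the reference index 0 can always be joined, infinitely often, to one more
   large index, and a diagonal chain gives the star; or along some subsequence 0 is
   eventually isolated from every large index, and dropping it lowers the bound K. *)
have [extend|] := pselect (forall S, frequently_star adj S ->
    forall J, exists2 j, J <= j & frequently_star adj (j :: S)).
  apply: star_subsequence_of_extensions extend => N.
  have [N0 _ refl0] := adj_refl 0.
  exists (maxn N N0); rewrite ?leq_maxl // => s.
  by rewrite inE => /eqP->; apply/refl0/leq_maxr.
move=> /existsNP[S /not_implyP[starS /existsNP[J stuck]]].
have [psi psi_incr psiS] := @frequently_subseq (fun _ n => forall s, s \in S -> adj n 0 s)
  (fun _ => starS).
apply: (star_subsequence_restrict (J := J) psi_incr); apply: IH.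
  by move=> i; exact: (increasing_cvgn psi_incr (adj_refl _)).
apply: (bounded_independence_drop psi_incr _ adj_bounded) => j Jj.
have /existsNP[N nstar] : ~ frequently_star adj (j :: S).
  by move=> star_jS; apply: stuck; exists j.
near=> k => adj_kj; apply: nstar; exists (psi k).
  by near: k; exact: (increasing_cvgn psi_incr (nbhs_infty_ge _)).
by move=> s; rewrite inE => /predU1P[->|/psiS].
Unshelve. all: end_near. Qed.

Local Open Scope ring_scope.

Section MetricBalls.
Variables (R : realType) (T : Type) (d : T -> T -> R).
Hypothesis hd : pl_is_metric d.

Lemma metric_sym x y : d x y = d y x. Proof. by case: hd. Qed.

Lemma metric_triangle x y z : d x z <= d x y + d y z. Proof. by case: hd. Qed.

Lemma metric_xx x : d x x = 0. Proof. by case: hd => _ h _ _; apply/h. Qed.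

Lemma mball_center x r : 0 < r -> pl_mball d x r x.
Proof. by rewrite /pl_mball /= metric_xx. Qed.

Lemma le_mball x r r' : r <= r' -> pl_mball d x r `<=` pl_mball d x r'.
Proof. by move=> rr' y; rewrite /pl_mball /= => /lt_le_trans; apply. Qed.

Lemma mball_metric_open x r : pl_metric_open d (pl_mball d x r).
Proof.
move=> y; rewrite /pl_mball /= => dxy; exists (r - d x y); first by rewrite subr_gt0.
by move=> z; rewrite /pl_mball /= => dyz; have := metric_triangle x y z; lra.
Qed.

Lemma meet_mball_sub x y a b :
  pl_mball d x a `&` pl_mball d y b !=set0 ->
  pl_mball d y b `<=` pl_mball d x (a + 2 * b).
Proof.
move=> [z [xz yz]] w yw; rewrite /pl_mball /= in xz yz yw *.
have := metric_triangle x z w; have := metric_triangle z y w.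
by rewrite (metric_sym z y); lra.
Qed.

End MetricBalls.

Lemma measurable_mball (R : realType) (dsp : measure_display) (T : measurableType dsp)
    (d : T -> T -> R) : pl_is_metric d -> measurable = pl_borel_sets d ->
  forall x r, measurable (pl_mball d x r).
Proof. by move=> hd -> x r; apply: sub_sigma_algebra; exact: mball_metric_open. Qed.

Section ConcentrationFunction.
Variables (R : realType) (T : Type) (d : T -> T -> R).

Lemma le_conc_fun (mu : set T -> \bar R) x t :
  (mu (pl_mball d x t) <= pl_conc_fun d mu t)%E.
Proof. by apply: ereal_sup_ubound; exists x. Qed.

Lemma conc_fun_gt (mu : set T -> \bar R) t (a : \bar R) :
  (a < pl_conc_fun d mu t)%E -> exists x, (a < mu (pl_mball d x t))%E.
Proof. by move=> /ereal_sup_gt[_ [x _ <-] ax]; exists x. Qed.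

End ConcentrationFunction.

Section ErealLimits.
Variables (R : realType) (I : Type) (F : set_system I).
Hypothesis FF : Filter F.

Lemma cvge_gt_near (u : I -> \bar R) (l b : R) :
  u x @[x --> F] --> l%:E -> b < l -> \forall x \near F, (b%:E < u x)%E.
Proof. by move=> ul bl; apply: (ul [set y | b%:E < y]%E); exact: open_ereal_gt'. Qed.

Lemma cvge_lt_near (u : I -> \bar R) (l b : R) :
  u x @[x --> F] --> l%:E -> l < b -> \forall x \near F, (u x < b%:E)%E.
Proof. by move=> ul lb; apply: (ul [set y | y < b%:E]%E); exact: open_ereal_lt'. Qed.

Lemma cvge_near_between (u : I -> \bar R) (l : R) :
  (forall eps, 0 < eps ->
     \forall x \near F, ((l - eps)%:E < u x)%E /\ (u x < (l + eps)%:E)%E) ->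
  u x @[x --> F] --> l%:E.
Proof.
have fin_between x eps : ((l - eps)%:E < u x)%E -> (u x < (l + eps)%:E)%E ->
    (u x = (fine (u x))%:E).
  by case: (u x).
move=> between; apply/fine_cvgP; split.
  by apply: filterS (between 1 ltr01) => x [lo hi]; rewrite (fin_between _ _ lo hi).
apply/cvgrPdist_lt => eps eps0; apply: filterS (between eps eps0) => x [lo hi].
have ux := fin_between _ _ lo hi; move: lo hi; rewrite ux !lte_fin /= ltr_distlC; lra.
Qed.

End ErealLimits.

Lemma trivIset_measure_ge (dsp : measure_display) (T : measurableType dsp) (R : realType)
    (mu : {measure set T -> \bar R}) (F : nat -> set T) (K : nat) (c : R) :
  (forall i, measurable (F i)) -> trivIset `I_K.+1 F ->
  (forall i, (i < K.+1)%N -> (c%:E <= mu (F i))%E) ->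
  ((c *+ K.+1)%:E <= mu [set: T])%E.
Proof.
move=> mF tF cF.
have mass := measure_semi_additive_ord_I mu (fun k _ => mF k) tF
  (bigsetU_measurable _ (fun (k : 'I_K.+1) _ => mF k)).
have sum_c : (\sum_(i < K.+1) c%:E = (c *+ K.+1)%:E)%E.
  by rewrite sumEFin sumr_const card_ord.
rewrite -sum_c; apply: (@le_trans _ _ (\sum_(i < K.+1) mu (F i))%E).
  by apply: lee_sum => i _; exact: cF.
rewrite -mass; apply: le_measure; rewrite ?inE //.
exact: bigsetU_measurable.
Qed.

Lemma ae_exists_itv (R : realType) (P : R -> Prop) (a b : R) :
  {ae (@lebesgue_measure R), forall t, P t} -> a < b -> exists t, a < t < b /\ P t.
Proof.
move=> [N [mN N0 notP_N]] ab; apply: contrapT => noP.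
have : [set` `]a, b[] `<=` N.
  by move=> t /= abt; apply: notP_N => Pt; apply: noP; exists t.
move=> /(@le_measure _ _ _ lebesgue_measure); rewrite !inE.
move=> /(_ (measurable_itv _) mN) itvN.
have : (lebesgue_measure [set` `]a, b[] <= 0)%E.
  by apply: le_trans itvN _; rewrite le_eqVlt; apply/orP; left; apply/eqP; exact: N0.
by rewrite lebesgue_measure_itv /= lte_fin ab -EFinD lee_fin; lra.
Qed.

Lemma conc_fun_eventually_gt (R : realType) (T : Type) (d : T -> T -> R)
    (mu : nat -> set T -> \bar R) (q : R -> R) (alpha : R) :
  {ae (@lebesgue_measure R), forall t : R,
     0 < t -> pl_conc_fun d (mu n) t @[n --> \oo] --> (q t)%:E} ->
  q t @[t --> +oo%R] --> (alpha : R^o) ->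
  forall e, 0 < e -> exists2 s, 0 < s &
    \forall n \near \oo, ((alpha - e)%:E < pl_conc_fun d (mu n) s)%E.
Proof.
move=> hq hqlim e e0.
have e20 : 0 < e / 2 by lra.
have /cvgrPdist_lt/(_ _ e20)[A [_ qA]] := hqlim.
have [s [/andP[As _] hs]] := ae_exists_itv hq (ltr_pwDr ltr01 (lexx (Num.max A 0))).
have s0 : 0 < s by apply: le_lt_trans As; rewrite le_max lexx orbT.
exists s => //; apply: cvge_gt_near (hs s0) _.
have : A < s by apply: le_lt_trans As; rewrite le_max lexx.
by move=> /qA; rewrite ltr_distlC; lra.
Qed.

Section GoodBalls.
Variables (R : realType) (dsp : measure_display) (T : measurableType dsp).
Variables (d : T -> T -> R) (mu : nat -> {measure set T -> \bar R}) (M alpha : R).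
Hypotheses (hd : pl_is_metric d) (hborel : measurable = pl_borel_sets d).
Hypotheses (hmass : forall n, (mu n [set: T] <= M%:E)%E) (halpha : 0 < alpha).
Variables (e s : nat -> R) (Y : nat -> nat -> T).
Hypotheses (e_le_half : forall b, e b <= alpha / 2) (s_gt0 : forall b, 0 < s b).
Hypothesis e_small : forall eps, 0 < eps -> \forall b \near \oo, e b <= eps.
Hypothesis Y_mass : forall b,
  \forall n \near \oo, ((alpha - e b)%:E < mu n (pl_mball d (Y n b) (s b)))%E.

Let good_ball n b := pl_mball d (Y n b) (s b).

Let good_balls_meet n i j := good_ball n i `&` good_ball n j !=set0.

Lemma good_balls_bounded_independence :
  exists K, bounded_independence good_balls_meet K.
Proof.
have alpha2 : 0 < alpha / 2 by rewrite divr_gt0.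
pose K := Num.truncn (M / (alpha / 2)).
(* each good ball has mass at least alpha / 2, so K + 1 disjoint ones would exceed M *)
have hK : M < (alpha / 2) *+ K.+1.
  by rewrite -mulr_natr mulrC -ltr_pdivrMr // truncnS_gt.
exists K => f.
have heavy : \forall n \near \oo,
    forall a : 'I_K.+1, ((alpha / 2)%:E <= mu n (good_ball n (f a)))%E.
  apply: filter_forall => a; apply: filterS (Y_mass (f a)) => n /ltW.
  by apply: le_trans; rewrite lee_fin; have := e_le_half (f a); lra.
apply: filterS heavy => n heavy; apply: contrapT => indep.
have tF : trivIset `I_K.+1 (fun a => good_ball n (f a)).
  move=> a b /= aK bK ab_meet; apply: contrapT => /eqP.
  rewrite neq_ltn => /orP[lt_ab|lt_ba]; apply: indep.
    by exists a, b; rewrite lt_ab.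
  by exists b, a; rewrite lt_ba; split; last by rewrite /good_balls_meet setIC.
have := trivIset_measure_ge (fun a => measurable_mball hd hborel _ _) tF
  (fun a aK => heavy (Ordinal aK)).
move=> /le_trans /(_ (hmass n)).
by rewrite lee_fin leNgt hK.
Qed.

Lemma good_centers_tight : exists (phi : nat -> nat) (x : nat -> T),
  {homo phi : m n / (m < n)%N} /\
  forall eps, 0 < eps -> exists r : R,
    \forall k \near \oo, ((alpha - eps)%:E < mu (phi k) (pl_mball d (x k) r))%E.
Proof.
have [K indep] := good_balls_bounded_independence.
have meet_refl i : \forall n \near \oo, good_balls_meet n i i.
  by apply: nearW => n; exists (Y n i); split; apply: mball_center.
have [phi [g [phi_incr g_ge meet_g]]] := star_subsequence_of_bounded meet_refl indep.
exists phi, (fun k => Y (phi k) (g 0%N)); split => // eps eps0.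
have [j _ e_j] := e_small eps0.
exists (s (g 0%N) + 2 * s (g j)).
have := increasing_cvgn phi_incr (Y_mass (g j)).
apply: filterS2 (meet_g j) => k meet_k mass_k.
have e_gj : e (g j) <= eps := e_j _ (g_ge j).
apply: le_lt_trans (lt_le_trans mass_k _); first by rewrite lee_fin; lra.
apply: le_measure; rewrite ?inE; try exact: measurable_mball.
exact: meet_mball_sub.
Qed.

End GoodBalls.

Lemma tight_subsequence (R : realType) (dsp : measure_display) (T : measurableType dsp)
    (d : T -> T -> R) (mu : nat -> {measure set T -> \bar R}) (M alpha : R) :
  pl_is_metric d -> measurable = pl_borel_sets d ->
  (forall n, (mu n [set: T] <= M%:E)%E) -> 0 < alpha ->
  (forall e, 0 < e -> exists2 s, 0 < s &
     \forall n \near \oo, ((alpha - e)%:E < pl_conc_fun d (mu n) s)%E) ->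
  exists (phi : nat -> nat) (x : nat -> T), {homo phi : m n / (m < n)%N} /\
    forall eps, 0 < eps -> exists r : R,
      \forall k \near \oo, ((alpha - eps)%:E < mu (phi k) (pl_mball d (x k) r))%E.
Proof.
move=> hd hborel hmass halpha hconc.
pose e b := Num.min (alpha / 2) b.+1%:R^-1.
have e_gt0 b : 0 < e b by rewrite lt_min divr_gt0 // invr_gt0 ltr0n.
have /choice[s sP] : forall b, exists s, 0 < s /\
    \forall n \near \oo, ((alpha - e b)%:E < pl_conc_fun d (mu n) s)%E.
  by move=> b; have [s] := hconc _ (e_gt0 b); exists s.
(* a junk centre for the pairs (n, b) where no heavy ball is guaranteed *)
have [x0 _] : exists x0 : T, True.
  have [N _ /(_ N (leqnn N))/conc_fun_gt[x0 _]] := (sP 0%N).2.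
  by exists x0.
have /choice[Y Y_mass] : forall nb : nat * nat, exists y,
    ((alpha - e nb.2)%:E < pl_conc_fun d (mu nb.1) (s nb.2))%E ->
    ((alpha - e nb.2)%:E < mu nb.1 (pl_mball d y (s nb.2)))%E.
  move=> [n b] /=.
  have [/conc_fun_gt[y y_mass]|] :=
    pselect ((alpha - e b)%:E < pl_conc_fun d (mu n) (s b))%E.
    by exists y.
  by exists x0.
apply: (@good_centers_tight _ _ _ _ _ M _ hd hborel hmass halpha e s
  (fun n b => Y (n, b))).
- by move=> b; rewrite ge_min lexx.
- by move=> b; case: (sP b).
- move=> eps eps0; apply: filterS (near_infty_natSinv_lt (PosNum eps0)) => b /ltW.
  by apply: le_trans; rewrite ge_min lexx orbT.
- by move=> b; apply: filterS (sP b).2 => n /(Y_mass (n, b)).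
Qed.

Lemma measure_setIC_lt (dsp : measure_display) (T : measurableType dsp) (R : realType)
    (mu : {measure set T -> \bar R}) (A B : set T) (a b : R) :
  measurable A -> measurable B -> B `<=` A ->
  (a%:E < mu B)%E -> (mu A < b%:E)%E -> (mu (A `&` ~` B) < (b - a)%:E)%E.
Proof.
move=> mA mB BA aB Ab.
have mAB : measurable (A `&` ~` B) by apply: measurableI => //; exact: measurableC.
have mu_A : mu A = (mu B + mu (A `&` ~` B))%E.
  rewrite -measureU //; first by rewrite -setDE setDUK.
  by rewrite setIA setIAC setICr set0I.
have B0 : (0 <= mu B)%E := measure_ge0 _ _.
have C0 : (0 <= mu (A `&` ~` B))%E := measure_ge0 _ _.
move: aB Ab B0 C0; rewrite mu_A.
case: (mu B) => [xB| |] //; case: (mu (A `&` ~` B)) => [xC| |] //=.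
by rewrite !lte_fin; lra.
Qed.

Lemma restrict_mball_concentrates (R : realType) (dsp : measure_display)
    (T : measurableType dsp) (d : T -> T -> R) (mu : nat -> {measure set T -> \bar R})
    (x : nat -> T) (r : nat -> R) :
  pl_is_metric d -> measurable = pl_borel_sets d ->
  (forall eps, 0 < eps -> exists Re : R, \forall k \near \oo,
     (mu k (pl_mball d (x k) (r k) `&` ~` pl_mball d (x k) Re) < eps%:E)%E) ->
  pl_concentrates_around d (fun k => pl_restrict (mu k) (pl_mball d (x k) (r k))) x.
Proof.
move=> hd hborel tail eps eps0; have [Re [N _ tailN]] := tail eps eps0.
pose Re' := \big[Num.max/Num.max Re 1]_(k < N) r k.
have Re_le : Num.max Re 1 <= Re' := bigmax_ge_id _ _ _ _.
exists Re'; first by apply: lt_le_trans Re_le; rewrite lt_max ltr01 orbT.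
move=> k; rewrite /pl_restrict.
have mball := measurable_mball hd hborel.
have [Nk|kN] := leqP N k.
  apply: le_lt_trans (tailN k Nk); apply: le_measure; rewrite ?inE.
  1, 2: by apply: measurableI; [exact: mball | apply: measurableC; exact: mball].
  apply: setIS; apply: subsetC; apply: le_mball.
  by apply: le_trans Re_le; rewrite le_max lexx.
suff -> : pl_mball d (x k) (r k) `&` ~` pl_mball d (x k) Re' = set0.
  by rewrite measure0 lte_fin.
apply/disjoints_subset; rewrite setCK; apply: le_mball.
exact: (@le_bigmax _ _ _ _ (fun k : 'I_N => r k) (Ordinal kN)).
Qed.

Section TightSequence.
Variables (R : realType) (dsp : measure_display) (T : measurableType dsp).
Variables (d : T -> T -> R) (nu : nat -> {measure set T -> \bar R}).
Variables (x : nat -> T) (r : nat -> R) (alpha : R).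
Hypotheses (hd : pl_is_metric d) (hborel : measurable = pl_borel_sets d).
Hypothesis tight : forall eps, 0 < eps -> exists r0 : R,
  \forall k \near \oo, ((alpha - eps)%:E < nu k (pl_mball d (x k) r0))%E.
Hypothesis r_cvg : r k @[k --> \oo] --> +oo%R.
Hypothesis conc_cvg : pl_conc_fun d (nu k) (r k) @[k --> \oo] --> alpha%:E.

Let mball := measurable_mball hd hborel.

Let conc_lt eps : 0 < eps ->
  \forall k \near \oo, (nu k (pl_mball d (x k) (r k)) < (alpha + eps)%:E)%E.
Proof.
move=> eps0; have alpha_lt : alpha < alpha + eps by rewrite ltrDl.
apply: filterS (cvge_lt_near conc_cvg alpha_lt) => k.
by apply: le_lt_trans; exact: le_conc_fun.
Qed.

Lemma tight_mball_cvg : nu k (pl_mball d (x k) (r k)) @[k --> \oo] --> alpha%:E.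
Proof.
apply: cvge_near_between => eps eps0; have [r0 tight_r0] := tight eps0.
near=> k; split; last by near: k; exact: conc_lt.
apply: lt_le_trans (le_measure _ (mem_set (mball (x k) r0)) (mem_set (mball _ _)) _).
  by near: k.
by apply: le_mball; near: k; exact: cvgry_ge r_cvg r0.
Unshelve. all: end_near. Qed.

Lemma tight_restrict_concentrates :
  pl_concentrates_around d (fun k => pl_restrict (nu k) (pl_mball d (x k) (r k))) x.
Proof.
apply: (restrict_mball_concentrates hd hborel) => eps eps0.
have eps2 : 0 < eps / 2 by rewrite divr_gt0.
have [r0 tight_r0] := tight eps2; exists r0.
near=> k; apply: lt_le_trans (measure_setIC_lt (a := alpha - eps / 2)
  (b := alpha + eps / 2) (mball _ _) (mball _ _) _ _ _) _.
- by apply: le_mball; near: k; exact: cvgry_ge r_cvg r0.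
- by near: k.
- by near: k; exact: conc_lt.
by rewrite lee_fin; lra.
Unshelve. all: end_near. Qed.

End TightSequence.

Theorem lemma1p3 (R : realType) (dsp : measure_display) (T : measurableType dsp)
  (d : T -> T -> R)
  (hd : pl_is_metric d)
  (hborel : @measurable dsp T = pl_borel_sets d)
  (mu : nat -> {measure set T -> \bar R}) (M : R) (hM : 0 < M)
  (hmass : forall n, (mu n [set: T] <= M%:E)%E)
  (q : R -> R)
  (hq : {ae (@lebesgue_measure R), forall t : R,
          0 < t -> pl_conc_fun d (mu n) t @[n --> \oo] --> (q t)%:E})
  (alpha : R) (halpha : 0 < alpha)
  (hqlim : q t @[t --> +oo%R] --> (alpha : R^o))
  (tt : nat -> R) (htt_incr : {homo tt : n m / (n <= m)%N >-> n <= m})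
  (htt_inf : tt n @[n --> \oo] --> +oo%R)
  (htt_conc : pl_conc_fun d (mu n) (tt n) @[n --> \oo] --> alpha%:E) :
  exists (phi : nat -> nat) (x : nat -> T) (Rk : nat -> R),
    [/\ {homo phi : n m / (n < m)%N >-> (n < m)%N},
        forall k, 0 < Rk k /\ Rk k <= tt (phi k),
        Rk k @[k --> \oo] --> +oo%R,
        mu (phi k) (pl_mball d (x k) (Rk k)) @[k --> \oo] --> alpha%:E &
        pl_concentrates_around d
          (fun k => pl_restrict (mu (phi k)) (pl_mball d (x k) (Rk k))) x].
Proof.
have [phi [x [phi_incr tight]]] :=
  tight_subsequence hd hborel hmass halpha (conc_fun_eventually_gt hq hqlim).
have [N _ tt_pos] := cvgry_gt htt_inf 0.
pose psi k := phi (k + N)%N.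
have psi_incr : {homo psi : m n / (m < n)%N}.
  by move=> m n mn; apply/phi_incr; rewrite ltn_add2r.
have tight_psi eps : 0 < eps -> exists r : R, \forall k \near \oo,
    ((alpha - eps)%:E < mu (psi k) (pl_mball d (x (k + N)%N) r))%E.
  move=> eps0; have [r tight_r] := tight eps eps0.
  by exists r; exact: (cvg_addnr N _ tight_r).
have tt_psi := cvg_comp _ _ (increasing_cvgn psi_incr) htt_inf.
have conc_psi := cvg_comp _ _ (increasing_cvgn psi_incr) htt_conc.
exists psi, (fun k => x (k + N)%N), (fun k => tt (psi k)); split => //.
- move=> k; split => //; apply: tt_pos.
  exact: leq_trans (leq_addl k N) (increasing_leq phi_incr _).
- exact: (tight_mball_cvg hd hborel tight_psi tt_psi conc_psi).
- exact: (tight_restrict_concentrates hd hborel tight_psi tt_psi conc_psi).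
Qed.
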